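(* Let $(L,[\cdot,\cdot],\cdot,\alpha)$ be a multiplicative Hom-post-Lie algebra, let $(M_i,\diamond_i,\bullet_i,\alpha_{M_i})$, $i=1,2$, be two modules over $L$, and let $k$ be a non-negative integer. On $M_1\otimes M_2$ define $\alpha_M(m_1\otimes m_2)=\alpha_{M_1}(m_1)\otimes\alpha_{M_2}(m_2)$, $x\diamond(m_1\otimes m_2)=(\alpha^k(x)\diamond_1 m_1)\otimes\alpha_{M_2}(m_2)+\alpha_{M_1}(m_1)\otimes(\alpha^k(x)\diamond_2 m_2)$, $x\bullet(m_1\otimes m_2)=(\alpha^k(x)\bullet_1 m_1)\otimes\alpha_{M_2}(m_2)+\alpha_{M_1}(m_1)\otimes(\alpha^k(x)\bullet_2 m_2)$. Then $(M_1\otimes M_2,\diamond,\bullet,\alpha_M)$ is a module over $L$.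
   Context: All vector spaces are over a field $\mathbb{K}$ of characteristic $\neq 2$. A Hom-Lie algebra is $(L,[\cdot,\cdot],\alpha)$ with $[\cdot,\cdot]$ bilinear skew-symmetric, $\alpha$ linear, and $[\alpha(x),[y,z]]+[\alpha(y),[z,x]]+[\alpha(z),[x,y]]=0$. A Hom-post-Lie algebra $(L,[\cdot,\cdot],\cdot,\alpha)$ is a Hom-Lie algebra with bilinear $\cdot$ such that $\alpha(z)\cdot[x,y]-[z\cdot x,\alpha(y)]-[\alpha(x),z\cdot y]=0$ and $\alpha(z)\cdot(y\cdot x)-\alpha(y)\cdot(z\cdot x)+(y\cdot z)\cdot\alpha(x)-(z\cdot y)\cdot\alpha(x)+[y,z]\cdot\alpha(x)=0$ for all $x,y,z$; it is multiplicative if $\alpha([x,y])=[\alpha(x),\alpha(y)]$ and $\alpha(x\cdot y)=\alpha(x)\cdot\alpha(y)$. A module over $L$ is a vector space $M$ with linear $\alpha_M$ and bilinear $\diamond,\bullet:L\otimes M\to M$ such that for all $x,y\in L,m\in M$: (i) $\alpha_M(x\diamond m)=\alpha(x)\diamond\alpha_M(m)$, $\alpha_M(x\bullet m)=\alpha(x)\bullet\alpha_M(m)$; (ii) $[x,y]\diamond\alpha_M(m)=\alpha(x)\diamond(y\diamond m)-\alpha(y)\diamond(x\diamond m)$; (iii) $(x\cdot y)\diamond\alpha_M(m)=\alpha(x)\bullet(y\diamond m)-\alpha(y)\diamond(x\bullet m)$; (iv) $[x,y]\bullet\alpha_M(m)=\alpha(x)\bullet(y\bullet m)-\alpha(y)\bullet(x\bullet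 m)-(x\cdot y)\bullet\alpha_M(m)+(y\cdot x)\bullet\alpha_M(m)$. *)

From HB Require Import structures.
From mathcomp Require Import all_boot all_order all_algebra.
Set Implicit Arguments. Unset Strict Implicit. Unset Printing Implicit Defensive.
Import GRing.Theory.
Local Open Scope ring_scope.

Section Defs.
Variable K : fieldType.

Definition lin (U V : lmodType K) (f : U -> V) : Prop :=
  forall (a : K) (u v : U), f (a *: u + v) = a *: f u + f v.

Definition bilin (U V W : lmodType K) (f : U -> V -> W) : Prop :=
  (forall u : U, lin (f u)) /\ (forall v : V, lin (fun u => f u v)).

Definition HomLie (L : lmodType K) (br : L -> L -> L) (alpha : L -> L) : Prop :=
  [/\ bilin br, lin alpha,
      (forall x y, br x y = - br y x) &
      (forall x y z, br (alpha x) (br y z) + br (alpha y) (br z x)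
                     + br (alpha z) (br x y) = 0)].

Definition HomPostLie (L : lmodType K) (br dot : L -> L -> L) (alpha : L -> L)
  : Prop :=
  [/\ HomLie br alpha, bilin dot,
      (forall x y z, dot (alpha z) (br x y) - br (dot z x) (alpha y)
                     - br (alpha x) (dot z y) = 0) &
      (forall x y z, dot (alpha z) (dot y x) - dot (alpha y) (dot z x)
                     + dot (dot y z) (alpha x) - dot (dot z y) (alpha x)
                     + dot (br y z) (alpha x) = 0)].

Definition HomPL_multiplicative (L : lmodType K) (br dot : L -> L -> L)
  (alpha : L -> L) : Prop :=
  (forall x y, alpha (br x y) = br (alpha x) (alpha y)) /\
  (forall x y, alpha (dot x y) = dot (alpha x) (alpha y)).

Definition HomPostLieModule (L : lmodType K) (br dot : L -> L -> L)
  (alpha : L -> L) (M : lmodType K) (dia bul : L -> M -> M) (alphaM : M -> M)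
  : Prop :=
  [/\ lin alphaM, bilin dia, bilin bul,
      (forall x m, alphaM (dia x m) = dia (alpha x) (alphaM m)) /\
      (forall x m, alphaM (bul x m) = bul (alpha x) (alphaM m)) &
   [/\
      (forall x y m, dia (br x y) (alphaM m)
                     = dia (alpha x) (dia y m) - dia (alpha y) (dia x m)),
      (forall x y m, dia (dot x y) (alphaM m)
                     = bul (alpha x) (dia y m) - dia (alpha y) (bul x m)) &
      (forall x y m, bul (br x y) (alphaM m)
                     = bul (alpha x) (bul y m) - bul (alpha y) (bul x m)
                       - bul (dot x y) (alphaM m) + bul (dot y x) (alphaM m))]].

Definition is_tensor_product (M1 M2 T : lmodType K) (t : M1 -> M2 -> T)
  : Prop :=
  bilin t /\
  forall (W : lmodType K) (f : M1 -> M2 -> W), bilin f ->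
    exists g : T -> W,
      [/\ lin g, (forall m1 m2, g (t m1 m2) = f m1 m2) &
          (forall g' : T -> W, lin g' ->
             (forall m1 m2, g' (t m1 m2) = f m1 m2) -> forall u, g' u = g u)].

End Defs.

From mathcomp Require Import all_boot all_order all_algebra.
Import GRing.Theory.
Local Open Scope ring_scope.

(* Twisting the actions of a module by alpha^k again gives a module, because a
   multiplicative alpha^k commutes with alpha and preserves [.,.] and (.); so it
   suffices to treat k = 0. Then, on a pure tensor, each module identity
   expands into the two corresponding identities for M1 and M2 plus two pairs
   of cross terms, which cancel because the actions commute with the twisting
   maps; the universal property extends the identity from pure tensors to all
   of M1 (x) M2. *)

Set Implicit Arguments.
Unset Strict Implicit.

Section Linearity.
Variable K : fieldType.
Implicit Types U V W : lmodType K.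

Lemma linD U V (f : U -> V) : lin f -> {morph f : u v / u + v}.
Proof. by move=> hf u v; have := hf 1 u v; rewrite !scale1r. Qed.

Lemma lin0 U V (f : U -> V) : lin f -> f 0 = 0.
Proof. by move=> hf; have := hf (-1) 0 0; rewrite scaler0 addr0 scaleN1r addNr. Qed.

Lemma linB U V (f : U -> V) : lin f -> {morph f : u v / u - v}.
Proof.
move=> hf u v; rewrite linD //; congr (_ + _).
by have := hf (-1) v 0; rewrite !addr0 lin0 // addr0 !scaleN1r.
Qed.

Lemma lin_comp U V W (f : V -> W) (g : U -> V) :
  lin f -> lin g -> lin (fun u => f (g u)).
Proof. by move=> hf hg a u v; rewrite hg hf. Qed.

Lemma lin_add U V (f g : U -> V) : lin f -> lin g -> lin (fun u => f u + g u).
Proof. by move=> hf hg a u v; rewrite hf hg scalerDr addrACA. Qed.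

Lemma lin_sub U V (f g : U -> V) : lin f -> lin g -> lin (fun u => f u - g u).
Proof. by move=> hf hg a u v; rewrite hf hg scalerBr opprD addrACA. Qed.

Lemma lin_iter V (f : V -> V) n : lin f -> lin (iter n f).
Proof. by move=> hf; elim: n => [//|n IHn]; apply: lin_comp. Qed.

Lemma tensor_lin_ext (M1 M2 T W : lmodType K) (t : M1 -> M2 -> T) (g1 g2 : T -> W) :
  is_tensor_product t -> lin g1 -> lin g2 ->
  (forall m1 m2, g1 (t m1 m2) = g2 (t m1 m2)) -> forall u, g1 u = g2 u.
Proof.
move=> [[ht1 ht2] ht_univ] lin_g1 lin_g2 g12 u.
have bilin_g1t : bilin (fun m1 m2 => g1 (t m1 m2)).
  by split=> m a x y; rewrite ?ht1 ?ht2 lin_g1.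
have [g [_ _ g_uniq]] := ht_univ W _ bilin_g1t.
by rewrite (g_uniq g1) // (g_uniq g2).
Qed.

End Linearity.

Lemma iter_morph2 (A : Type) (f : A -> A) (op : A -> A -> A) n :
  {morph f : x y / op x y} -> {morph iter n f : x y / op x y}.
Proof. by move=> fM; elim: n => [//|n IHn] x y; rewrite !iterS IHn fM. Qed.

Lemma addr_cross_cancel (V : zmodType) (a b c d p q : V) :
  a + p + (q + c) - (b + q + (p + d)) = a - b + (c - d).
Proof.
rewrite (addrC q c) (addrACA a p c q) (addrC p d) (addrACA b q d p) (addrC q p).
by rewrite (addrC (b + d)) addrKA (addrACA a (-b)) opprD.
Qed.

Section Twist.
Variables (K : fieldType) (L : lmodType K) (br dot : L -> L -> L) (alpha : L -> L).
Hypotheses (lin_alpha : lin alpha) (alpha_mul : HomPL_multiplicative br dot alpha).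

Lemma HomPostLieModule_iter_twist (M : lmodType K) (dia bul : L -> M -> M)
    (alphaM : M -> M) k :
  HomPostLieModule br dot alpha dia bul alphaM ->
  HomPostLieModule br dot alpha
    (fun x => dia (iter k alpha x)) (fun x => bul (iter k alpha x)) alphaM.
Proof.
case: alpha_mul => alpha_br alpha_dot.
have iter_br := iter_morph2 k alpha_br; have iter_dot := iter_morph2 k alpha_dot.
have iter_alpha x : iter k alpha (alpha x) = alpha (iter k alpha x).
  by rewrite -iterSr.
move=> [lin_alphaM [lin_dia lin_dia'] [lin_bul lin_bul'] [eq_dia eq_bul]
        [br_dia dot_dia br_bul]].
split=> //.
- by split=> // m; apply: lin_comp (lin_dia' m) (lin_iter k lin_alpha).
- by split=> // m; apply: lin_comp (lin_bul' m) (lin_iter k lin_alpha).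
- by split=> x m; rewrite iter_alpha ?eq_dia ?eq_bul.
- by split=> x y m; rewrite !iter_alpha ?iter_br ?iter_dot ?br_dia ?dot_dia ?br_bul.
Qed.

End Twist.

Section TensorProductModule.
Variables (K : fieldType) (L : lmodType K) (br dot : L -> L -> L) (alpha : L -> L).
Variables (M1 M2 T : lmodType K) (t : M1 -> M2 -> T).
Variables (alpha1 : M1 -> M1) (alpha2 : M2 -> M2) (alphaM : T -> T).
Hypothesis hT : is_tensor_product t.
Hypothesis alphaM_t : forall m1 m2, alphaM (t m1 m2) = t (alpha1 m1) (alpha2 m2).

Definition tensor_action (rho : L -> T -> T) rho1 rho2 :=
  forall x m1 m2, rho x (t m1 m2) = t (rho1 x m1) (alpha2 m2) + t (alpha1 m1) (rho2 x m2).

Definition hom_equivariant (M : lmodType K) (beta : M -> M) (rho : L -> M -> M) :=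
  forall x m, beta (rho x m) = rho (alpha x) (beta m).

Let tDl m2 : {morph t^~ m2 : a b / a + b}. Proof. exact: linD (hT.1.2 m2). Qed.
Let tDr m1 : {morph t m1 : a b / a + b}. Proof. exact: linD (hT.1.1 m1). Qed.
Let tBl m2 : {morph t^~ m2 : a b / a - b}. Proof. exact: linB (hT.1.2 m2). Qed.
Let tBr m1 : {morph t m1 : a b / a - b}. Proof. exact: linB (hT.1.1 m1). Qed.

Section PureTensors.
Variables (rho sigma : L -> T -> T) (rho1 sigma1 : L -> M1 -> M1).
Variables (rho2 sigma2 : L -> M2 -> M2).
Hypotheses (rho_t : tensor_action rho rho1 rho2) (sigma_t : tensor_action sigma sigma1 sigma2).
Hypotheses (eq_rho1 : hom_equivariant alpha1 rho1) (eq_rho2 : hom_equivariant alpha2 rho2).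
Hypotheses (eq_sigma1 : hom_equivariant alpha1 sigma1).
Hypotheses (eq_sigma2 : hom_equivariant alpha2 sigma2).

Lemma tensor_action_equivariant (lin_alphaM : lin alphaM) x m1 m2 :
  alphaM (rho x (t m1 m2)) = rho (alpha x) (alphaM (t m1 m2)).
Proof. by rewrite rho_t (linD lin_alphaM) !alphaM_t rho_t eq_rho1 eq_rho2. Qed.

Lemma tensor_action_commutator (lin_rho : forall x, lin (rho x))
    (lin_sigma : forall x, lin (sigma x)) x y m1 m2 :
  rho (alpha x) (sigma y (t m1 m2)) - sigma (alpha y) (rho x (t m1 m2)) =
  t (rho1 (alpha x) (sigma1 y m1) - sigma1 (alpha y) (rho1 x m1)) (alpha2 (alpha2 m2))
  + t (alpha1 (alpha1 m1)) (rho2 (alpha x) (sigma2 y m2) - sigma2 (alpha y) (rho2 x m2)).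
Proof.
rewrite sigma_t rho_t (linD (lin_rho _)) (linD (lin_sigma _)) !rho_t !sigma_t.
by rewrite eq_rho1 eq_rho2 eq_sigma1 eq_sigma2 tBl tBr addr_cross_cancel.
Qed.

End PureTensors.

Variables (dia1 bul1 : L -> M1 -> M1) (dia2 bul2 : L -> M2 -> M2).
Variables (dia bul : L -> T -> T).
Hypotheses (hM1 : HomPostLieModule br dot alpha dia1 bul1 alpha1)
           (hM2 : HomPostLieModule br dot alpha dia2 bul2 alpha2).
Hypotheses (lin_alphaM : lin alphaM) (lin_dia : bilin dia) (lin_bul : bilin bul).
Hypotheses (dia_t : tensor_action dia dia1 dia2) (bul_t : tensor_action bul bul1 bul2).

Lemma tensor_module : HomPostLieModule br dot alpha dia bul alphaM.
Proof.
have [_ _ _ [eq_dia1 eq_bul1] [br_dia1 dot_dia1 br_bul1]] := hM1.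
have [_ _ _ [eq_dia2 eq_bul2] [br_dia2 dot_dia2 br_bul2]] := hM2.
have ext := tensor_lin_ext hT.
have [lin_dia_r _] := lin_dia; have [lin_bul_r _] := lin_bul.
split=> //.
- split=> x; apply: ext => [||m1 m2];
    by [apply: lin_comp | apply: tensor_action_equivariant].
- split=> x y; apply: ext => [||m1 m2]; try exact: lin_comp.
  + by apply: lin_sub; apply: lin_comp.
  + rewrite (tensor_action_commutator dia_t dia_t) //.
    by rewrite alphaM_t dia_t br_dia1 br_dia2.
  + by apply: lin_sub; apply: lin_comp.
  + rewrite (tensor_action_commutator bul_t dia_t) //.
    by rewrite alphaM_t dia_t dot_dia1 dot_dia2.
  + by apply: lin_add; [apply: lin_sub; [apply: lin_sub|]|]; apply: lin_comp.
  rewrite (tensor_action_commutator bul_t bul_t) // !alphaM_t !bul_t br_bul1 br_bul2.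
  rewrite tDl tBl tDr tBr opprD [LHS]addrACA; congr (_ + _); exact: addrACA.
Qed.

End TensorProductModule.

Theorem mainTheorem3 (K : fieldType) (hchar : (2 \notin [pchar K])%N)
  (L : lmodType K) (br dot : L -> L -> L) (alpha : L -> L)
  (hL : HomPostLie br dot alpha) (hmul : HomPL_multiplicative br dot alpha)
  (M1 : lmodType K) (dia1 bul1 : L -> M1 -> M1) (alpha1 : M1 -> M1)
  (hM1 : HomPostLieModule br dot alpha dia1 bul1 alpha1)
  (M2 : lmodType K) (dia2 bul2 : L -> M2 -> M2) (alpha2 : M2 -> M2)
  (hM2 : HomPostLieModule br dot alpha dia2 bul2 alpha2)
  (k : nat)
  (T : lmodType K) (t : M1 -> M2 -> T) (hT : is_tensor_product t)
  (alphaM : T -> T) (dia bul : L -> T -> T)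
  (halphaM_lin : lin alphaM) (hdia_lin : bilin dia) (hbul_lin : bilin bul)
  (halphaM : forall m1 m2, alphaM (t m1 m2) = t (alpha1 m1) (alpha2 m2))
  (hdia : forall x m1 m2, dia x (t m1 m2) =
     t (dia1 (iter k alpha x) m1) (alpha2 m2)
     + t (alpha1 m1) (dia2 (iter k alpha x) m2))
  (hbul : forall x m1 m2, bul x (t m1 m2) =
     t (bul1 (iter k alpha x) m1) (alpha2 m2)
     + t (alpha1 m1) (bul2 (iter k alpha x) m2)) :
  HomPostLieModule br dot alpha dia bul alphaM.
Proof.
have [[_ lin_alpha _ _] _ _ _] := hL.
exact: (tensor_module hT halphaM
         (HomPostLieModule_iter_twist lin_alpha hmul k hM1)
         (HomPostLieModule_iter_twist lin_alpha hmul k hM2)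
         halphaM_lin hdia_lin hbul_lin hdia hbul).
Qed.
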